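(* Every tree (in which every nontrivial pseudo-supremum is a supremum) that is normal in the interval topology is countably paracompact.
   Context: A tree is a partially ordered set in which the set of predecessors of each element is well-ordered. For a nonempty chain bounded above, its pseudo-supremum is the set of its minimal upper bounds; standing assumption: each such set is a singleton. The interval topology has as base all sets $(s,t]=\{x:s<x\le t\}$ together with all singletons $\{t\}$ with $t$ minimal. A space is countably paracompact if every countable open cover has a locally finite open refinement. *)

From Stdlib Require Import List.

Section Tree.
Context {T : Type} (le : T -> T -> Prop).

Definition lt (s t : T) : Prop := le s t /\ s <> t.

Definition is_partial_order : Prop :=
  (forall x, le x x) /\
  (forall x y, le x y -> le y x -> x = y) /\
  (forall x y z, le x y -> le y z -> le x z).

Definition well_ordered_set (S : T -> Prop) : Prop :=
  (forall x y, S x -> S y -> le x y \/ le y x) /\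
  (forall A : T -> Prop, (forall x, A x -> S x) -> (exists x, A x) ->
     exists m, A m /\ forall x, A x -> le m x).

Definition is_tree : Prop :=
  is_partial_order /\ forall t, well_ordered_set (fun s => lt s t).

Definition is_chain (C : T -> Prop) : Prop :=
  forall x y, C x -> C y -> le x y \/ le y x.

Definition upper_bound (C : T -> Prop) (u : T) : Prop := forall c, C c -> le c u.

Definition pseudo_supremum (C : T -> Prop) : T -> Prop :=
  fun u => upper_bound C u /\ forall v, upper_bound C v -> le v u -> v = u.

Definition pseudo_suprema_singletons : Prop :=
  forall C : T -> Prop, is_chain C -> (exists c, C c) ->
    (exists u, upper_bound C u) ->
    exists s, forall x, pseudo_supremum C x <-> x = s.

Definition minimal (t : T) : Prop := forall x, le x t -> x = t.

Definition ioc (s t : T) : T -> Prop := fun x => lt s x /\ le x t.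

Definition interval_base (B : T -> Prop) : Prop :=
  (exists s t, B = ioc s t) \/ (exists t, minimal t /\ B = (fun x => x = t)).

Definition interval_open (U : T -> Prop) : Prop :=
  forall x, U x -> exists B, interval_base B /\ B x /\ forall y, B y -> U y.

End Tree.

Section Topology.
Context {T : Type} (opn : (T -> Prop) -> Prop).

Definition closed_set (A : T -> Prop) : Prop := opn (fun x => ~ A x).

Definition normal_space : Prop :=
  forall A B : T -> Prop, closed_set A -> closed_set B ->
    (forall x, A x -> B x -> False) ->
    exists U V, opn U /\ opn V /\ (forall x, A x -> U x) /\
      (forall x, B x -> V x) /\ (forall x, U x -> V x -> False).

Definition meets (A B : T -> Prop) : Prop := exists x, A x /\ B x.

Definition finite_family (F : (T -> Prop) -> Prop) : Prop :=
  exists l : list (T -> Prop), forall V, F V -> In V l.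

Definition locally_finite (F : (T -> Prop) -> Prop) : Prop :=
  forall x, exists W, opn W /\ W x /\ finite_family (fun V => F V /\ meets V W).

Definition countably_paracompact : Prop :=
  forall U : nat -> (T -> Prop), (forall n, opn (U n)) ->
    (forall x, exists n, U n x) ->
    exists F : (T -> Prop) -> Prop,
      (forall V, F V -> opn V) /\
      (forall x, exists V, F V /\ V x) /\
      (forall V, F V -> exists n, forall x, V x -> U n x) /\
      locally_finite F.

End Topology.

(* For an open cover (U n), let W n = U 0 ∪ ... ∪ U n and call x n-covered
   when its whole down-cone lies in W n. Since predecessors are well-ordered
   and basic neighbourhoods are intervals (s, x], every point is n-covered for
   some n, and the points that are minimal non-n-covered points for some n form
   a closed discrete set D. Normality, applied inside D, expands the decreasing
   closed sets C n = {such points for levels >= n} to decreasing open sets G n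
   with empty intersection. Then K n = {n-covered} \ G n is closed, K n ⊆ W n
   and the K n cover the tree. Separating K n from the complement of W n by
   disjoint open P n and Q n, the sets U n ∩ Q 0 ∩ ... ∩ Q (n-1) form a
   locally finite open refinement: P n meets only the first n + 1 of them. *)

From Stdlib Require Import List Lia Arith Classical ClassicalEpsilon Wf_nat.

Section GeneralTopology.
Context {T : Type} (opn : (T -> Prop) -> Prop).
Hypothesis opn_ext : forall A B : T -> Prop,
  (forall x, A x <-> B x) -> opn A -> opn B.
Hypothesis opn_setT : opn (fun _ => True).
Hypothesis opn_setI : forall A B : T -> Prop,
  opn A -> opn B -> opn (fun x => A x /\ B x).
Hypothesis opn_bigcup : forall (I : Type) (P : I -> Prop) (V : I -> T -> Prop),
  (forall i, P i -> opn (V i)) -> opn (fun x => exists i, P i /\ V i x).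
Hypothesis normal : normal_space opn.

Lemma opn_bigcap_lt (O : nat -> T -> Prop) :
  (forall m, opn (O m)) -> forall n, opn (fun x => forall m, m < n -> O m x).
Proof.
  intros hO n; induction n as [|n IHn].
  - apply (opn_ext (fun _ => True)); [|exact opn_setT].
    intros x; split; intros; [lia|auto].
  - apply (opn_ext (fun x => (forall m, m < n -> O m x) /\ O n x)); [|auto].
    intros x; split.
    + intros [hlt hn] m hm.
      destruct (Nat.eq_dec m n) as [->|hne]; [exact hn|apply hlt; lia].
    + intros h; split; auto.
Qed.

Lemma closed_setC (A : T -> Prop) : opn A -> closed_set opn (fun x => ~ A x).
Proof. apply opn_ext; intros x; split; [auto|apply NNPP]. Qed.

Lemma normal_separation_seq (A B : nat -> T -> Prop) :
  (forall n, closed_set opn (A n)) -> (forall n, closed_set opn (B n)) ->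
  (forall n x, A n x -> B n x -> False) ->
  exists O V : nat -> T -> Prop,
    (forall n, opn (O n)) /\ (forall n, opn (V n)) /\
    (forall n x, A n x -> O n x) /\ (forall n x, B n x -> V n x) /\
    (forall n x, O n x -> V n x -> False).
Proof.
  intros hA hB hAB.
  destruct (choice (fun n (p : (T -> Prop) * (T -> Prop)) =>
    opn (fst p) /\ opn (snd p) /\ (forall x, A n x -> fst p x) /\
    (forall x, B n x -> snd p x) /\ (forall x, fst p x -> snd p x -> False)))
    as [f hf].
  - intros n. destruct (normal (A n) (B n) (hA n) (hB n) (hAB n)) as [O [V hOV]].
    exists (O, V); exact hOV.
  - exists (fun n => fst (f n)), (fun n => snd (f n)).
    repeat split; intros n; apply hf.
Qed.

Lemma discrete_decreasing_expansion (D : T -> Prop) (C : nat -> T -> Prop) :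
  (forall S, (forall x, S x -> D x) -> closed_set opn S) ->
  (forall n x, C n x -> D x) ->
  (forall m n x, m <= n -> C n x -> C m x) ->
  (forall x, exists n, ~ C n x) ->
  exists G : nat -> T -> Prop,
    (forall n, opn (G n)) /\ (forall n x, C n x -> G n x) /\
    (forall m n x, m <= n -> G n x -> G m x) /\ (forall x, exists n, ~ G n x).
Proof.
  intros hD hCD hCdec hCempty.
  destruct (normal_separation_seq C (fun n x => D x /\ ~ C n x))
    as [O [V [hO [hV [hCO [hEV hOV]]]]]];
    [intros n; apply hD, hCD|intros n; apply hD; tauto
    |intros n x hC [_ hnC]; exact (hnC hC)|].
  set (Z := fun x => forall n, ~ V n x).
  assert (hZ : closed_set opn Z).
  { apply (opn_ext (fun x => exists n, True /\ V n x)).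
    - intros x; split.
      + intros [n [_ hn]] hZx; exact (hZx n hn).
      + intros hx. apply NNPP; intros hno. apply hx; intros n hn. eauto.
    - apply opn_bigcup; intros n _; apply hV. }
  assert (hDZ : forall x, D x -> Z x -> False).
  { intros x hx hZx. destruct (hCempty x) as [k hk].
    apply (hZx k), hEV; split; assumption. }
  destruct (normal D Z (hD D (fun x h => h)) hZ hDZ)
    as [W0 [W1 [hW0 [_ [hDW0 [hZW1 hW01]]]]]].
  exists (fun n x => (forall m, m < S n -> O m x) /\ W0 x).
  split; [|split; [|split]].
  - intros n; apply opn_setI; [apply opn_bigcap_lt, hO|exact hW0].
  - intros n x hx; split; [|apply hDW0, (hCD n), hx].
    intros m hm; apply hCO, (hCdec m n); [lia|exact hx].
  - intros m n x hmn [hOx hx]; split; [intros k hk; apply hOx; lia|exact hx].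
  - intros x. destruct (classic (W0 x)) as [hx|hx].
    + assert (hnZ : ~ Z x) by (intros hz; exact (hW01 x hx (hZW1 x hz))).
      apply not_all_ex_not in hnZ as [k hk]; apply NNPP in hk.
      exists k; intros [hOx _]. apply (hOV k x); [apply hOx; lia|exact hk].
    + exists 0; intros [_ h]; exact (hx h).
Qed.

Lemma locally_finite_refinement (U K : nat -> T -> Prop) :
  (forall n, opn (U n)) -> (forall n, closed_set opn (K n)) ->
  (forall n x, K n x -> exists m, m <= n /\ U m x) ->
  (forall x, exists n, K n x) ->
  exists F : (T -> Prop) -> Prop,
    (forall V, F V -> opn V) /\
    (forall x, exists V, F V /\ V x) /\
    (forall V, F V -> exists n, forall x, V x -> U n x) /\
    locally_finite opn F.
Proof.
  intros hU hK hKU hKcov.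
  set (W := fun n x => exists m, m <= n /\ U m x).
  destruct (normal_separation_seq K (fun n x => ~ W n x))
    as [P [Q [hP [hQ [hKP [hWQ hPQ]]]]]];
    [exact hK|intros n; apply closed_setC, opn_bigcup; intros m _; apply hU
    |intros n x hx hnW; exact (hnW (hKU n x hx))|].
  set (R := fun n x => U n x /\ forall m, m < n -> Q m x).
  exists (fun V => exists n, V = R n). split; [|split; [|split]].
  - intros V [n ->]. apply opn_setI; [apply hU|apply opn_bigcap_lt, hQ].
  - intros x. destruct (hKcov x) as [k hk]. destruct (hKU k x hk) as [m [_ hm]].
    destruct (dec_inh_nat_subset_has_unique_least_element (fun n => U n x))
      as [n [[hn hleast] _]]; [intros n; apply classic|eauto|].
    exists (R n); split; [eauto|split; [exact hn|]].
    intros j hj; apply hWQ; intros [i [hij hi]].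
    specialize (hleast i hi); lia.
  - intros V [n ->]; exists n; intros x [hx _]; exact hx.
  - intros x. destruct (hKcov x) as [k hk].
    exists (P k); split; [apply hP|split; [apply hKP, hk|]].
    exists (map R (seq 0 (S k))). intros V [[n ->] [y [[_ hQy] hPy]]].
    apply in_map, in_seq.
    destruct (Nat.le_gt_cases n k) as [h|h]; [lia|].
    exfalso; apply (hPQ k y hPy), hQy, h.
Qed.

End GeneralTopology.

Section IntervalTopology.
Context {T : Type} (le : T -> T -> Prop).

Lemma lt_le_trans : is_partial_order le ->
  forall a b c, lt le a b -> le b c -> lt le a c.
Proof.
  intros [_ [antisym trans]] a b c [hab hne] hbc. split; [eauto|].
  intros ->. apply hne, antisym; assumption.
Qed.

Lemma le_lt_trans : is_partial_order le ->
  forall a b c, le a b -> lt le b c -> lt le a c.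
Proof.
  intros [_ [antisym trans]] a b c hab [hbc hne]. split; [eauto|].
  intros ->. apply hne, antisym; assumption.
Qed.

Lemma not_minimal_lt x : ~ minimal le x -> exists s, lt le s x.
Proof.
  intros h. apply NNPP; intros hno. apply h; intros y hy.
  apply NNPP; intros hne. apply hno. exists y; split; assumption.
Qed.

Lemma tree_ind : is_tree le -> forall P : T -> Prop,
  (forall z, (forall y, lt le y z -> P y) -> P z) -> forall x, P x.
Proof.
  intros [po wo] P step x. apply step. apply NNPP; intros hno.
  destruct (proj2 (wo x) (fun y => lt le y x /\ ~ P y)) as [a [[hax ha] hleast]].
  - intros y [hy _]; exact hy.
  - apply not_all_ex_not in hno as [y hy]. apply imply_to_and in hy. eauto.
  - apply ha, step. intros y hya. apply NNPP; intros hy.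
    assert (hyx : lt le y x) by exact (lt_le_trans po y a x hya (proj1 hax)).
    destruct hya as [hya hne]. apply hne, (proj1 (proj2 po)); [exact hya|].
    apply hleast; split; assumption.
Qed.

Lemma interval_open_ext (A B : T -> Prop) :
  (forall x, A x <-> B x) -> interval_open le A -> interval_open le B.
Proof.
  intros hAB hA x hx. destruct (hA x (proj2 (hAB x) hx)) as [C [hC [hCx hCA]]].
  exists C; split; [exact hC|split; [exact hCx|]]. intros y hy; apply hAB; auto.
Qed.

Lemma ioc_subset : is_partial_order le -> forall s s' t t' x,
  le s s' -> le t' t -> ioc le s' t' x -> ioc le s t x.
Proof.
  intros po s s' t t' x hs ht [hsx hxt].
  split; [exact (le_lt_trans po s s' x hs hsx)|exact (proj2 (proj2 po) x t' t hxt ht)].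
Qed.

Lemma interval_open_intro (A : T -> Prop) : (forall x, le x x) ->
  (forall x, A x -> ~ minimal le x ->
     exists s, lt le s x /\ forall y, ioc le s x y -> A y) ->
  interval_open le A.
Proof.
  intros refl hA x hx. destruct (classic (minimal le x)) as [hm|hm].
  - exists (fun y => y = x). split; [right; eauto|split; [reflexivity|]].
    intros y ->; exact hx.
  - destruct (hA x hx hm) as [s [hs hsA]]. exists (ioc le s x).
    split; [left; eauto|split; [split; [exact hs|apply refl]|exact hsA]].
Qed.

Lemma interval_open_elim (A : T -> Prop) : is_partial_order le -> interval_open le A ->
  forall x, A x -> ~ minimal le x -> exists s, lt le s x /\ forall y, ioc le s x y -> A y.
Proof.
  intros po hA x hx hm. destruct (hA x hx) as [B [hB [hBx hBA]]].
  destruct hB as [[s [t ->]]|[t [ht ->]]]; [|subst; contradiction].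
  exists s; split; [apply hBx|]. intros y hy; apply hBA.
  eapply ioc_subset; [exact po|apply po|apply hBx|exact hy].
Qed.

Lemma interval_open_setT : is_partial_order le -> interval_open le (fun _ => True).
Proof.
  intros po. apply interval_open_intro; [apply po|].
  intros x _ hm. destruct (not_minimal_lt x hm) as [s hs]. eauto.
Qed.

Lemma interval_open_setI : is_tree le -> forall A B : T -> Prop,
  interval_open le A -> interval_open le B -> interval_open le (fun x => A x /\ B x).
Proof.
  intros [po wo] A B hA hB. apply interval_open_intro; [apply po|].
  intros x [hAx hBx] hm.
  destruct (interval_open_elim A po hA x hAx hm) as [s1 [hs1 hs1A]].
  destruct (interval_open_elim B po hB x hBx hm) as [s2 [hs2 hs2B]].
  pose proof po as [refl _].
  destruct (proj1 (wo x) s1 s2 hs1 hs2) as [h|h];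
    [exists s2|exists s1]; (split; [assumption|]); intros y hy;
    (split; [apply hs1A|apply hs2B]; eapply ioc_subset; eauto).
Qed.

Lemma interval_open_bigcup (I : Type) (P : I -> Prop) (V : I -> T -> Prop) :
  (forall i, P i -> interval_open le (V i)) ->
  interval_open le (fun x => exists i, P i /\ V i x).
Proof.
  intros hV x [i [hi hx]]. destruct (hV i hi x hx) as [B [hB [hBx hBV]]].
  exists B; split; [exact hB|split; [exact hBx|]]. intros y hy; eauto.
Qed.

End IntervalTopology.

Section CoverOfTree.
Context {T : Type} (le : T -> T -> Prop) (U : nat -> T -> Prop).

Definition cover_upto (n : nat) (x : T) : Prop := exists m, m <= n /\ U m x.

Definition down_covered (n : nat) (x : T) : Prop := forall y, le y x -> cover_upto n y.

Definition first_uncovered (n : nat) (x : T) : Prop :=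
  ~ minimal le x /\ ~ down_covered n x /\ forall y, lt le y x -> down_covered n y.

Lemma down_covered_mono m n x : m <= n -> down_covered m x -> down_covered n x.
Proof.
  intros hmn hx y hy. destruct (hx y hy) as [k [hk hUk]].
  exists k; split; [lia|exact hUk].
Qed.

Lemma down_covered_le n x y : is_partial_order le ->
  le y x -> down_covered n x -> down_covered n y.
Proof. intros [_ [_ trans]] hyx hx w hw. apply hx; eauto. Qed.

Lemma no_first_uncovered_below k z :
  (forall y, lt le y z -> down_covered k y) -> ~ minimal le z ->
  exists s, lt le s z /\ forall y m, lt le s y -> lt le y z -> ~ first_uncovered m y.
Proof.
  revert z; induction k as [|k IHk]; intros z hz hm.
  - destruct (not_minimal_lt le z hm) as [s hs]. exists s; split; [exact hs|].
    intros y m _ hyz [_ [hy _]]. apply hy, (down_covered_mono 0); [lia|apply hz, hyz].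
  - destruct (classic (forall y, lt le y z -> down_covered k y)) as [h|h];
      [apply IHk; assumption|].
    apply not_all_ex_not in h as [s h]. apply imply_to_and in h as [hs hns].
    exists s; split; [exact hs|].
    intros y m hsy hyz [_ [hy hbelow]].
    destruct (Nat.le_gt_cases m k) as [hmk|hmk].
    + apply hns, (down_covered_mono m); [exact hmk|apply hbelow, hsy].
    + apply hy, (down_covered_mono (S k)); [lia|apply hz, hyz].
Qed.

Hypothesis tree : is_tree le.
Hypothesis U_open : forall n, interval_open le (U n).
Hypothesis U_cover : forall x, exists n, U n x.

Lemma down_covered_step z :
  (forall y, lt le y z -> exists n, down_covered n y) -> exists n, down_covered n z.
Proof.
  intros hbelow. destruct tree as [po wo]. pose proof po as [refl _].
  destruct (U_cover z) as [k hk].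
  destruct (classic (minimal le z)) as [hm|hm].
  - exists k. intros y hy. rewrite (hm y hy). exists k; split; [lia|exact hk].
  - destruct (interval_open_elim le (U k) po (U_open k) z hk hm) as [s [hs hsU]].
    destruct (hbelow s hs) as [n hn].
    exists (Nat.max k n). intros y hyz.
    destruct (classic (ioc le s z y)) as [hy|hy].
    + exists k; split; [lia|exact (hsU y hy)].
    + assert (hys : le y s).
      { destruct (classic (y = z)) as [->|hne]; [exfalso; apply hy; split; auto|].
        destruct (proj1 (wo z) y s (conj hyz hne) hs) as [h|h]; [exact h|].
        destruct (classic (s = y)) as [->|hsy]; [apply refl|].
        exfalso; apply hy; split; [split|]; assumption. }
      exact (down_covered_mono n (Nat.max k n) s ltac:(lia) hn y hys).
Qed.

Lemma exists_down_covered x : exists n, down_covered n x.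
Proof.
  exact (tree_ind le tree (fun x => exists n, down_covered n x) down_covered_step x).
Qed.

Lemma closed_first_uncovered (S : T -> Prop) :
  (forall x, S x -> exists m, first_uncovered m x) -> closed_set (interval_open le) S.
Proof.
  intros hS. destruct tree as [po _].
  apply interval_open_intro; [apply po|]. intros z hz hm.
  destruct (exists_down_covered z) as [k hk].
  destruct (no_first_uncovered_below k z) as [s [hs hsz]]; [|exact hm|].
  { intros y hy; apply (down_covered_le k z y po); [apply hy|exact hk]. }
  exists s; split; [exact hs|]. intros y [hsy hyz] hSy.
  destruct (classic (y = z)) as [->|hne]; [exact (hz hSy)|].
  destruct (hS y hSy) as [m hmy]. exact (hsz y m hsy (conj hyz hne) hmy).
Qed.

Lemma closed_down_covered_diff n (G : T -> Prop) :
  interval_open le G -> (forall x, first_uncovered n x -> G x) ->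
  closed_set (interval_open le) (fun x => down_covered n x /\ ~ G x).
Proof.
  intros hG hJG. destruct tree as [po _].
  apply interval_open_intro; [apply po|]. intros z hz hm.
  destruct (classic (G z)) as [hGz|hGz].
  - destruct (interval_open_elim le G po hG z hGz hm) as [s [hs hsG]].
    exists s; split; [exact hs|]. intros y hy [_ hGy]. exact (hGy (hsG y hy)).
  - assert (hnz : ~ down_covered n z) by (intros h; exact (hz (conj h hGz))).
    destruct (classic (exists y, lt le y z /\ ~ down_covered n y)) as [[s [hs hns]]|hno].
    + exists s; split; [exact hs|]. intros y [hsy _] [hy _].
      exact (hns (down_covered_le n y s po (proj1 hsy) hy)).
    + exfalso; apply hGz, hJG. split; [exact hm|split; [exact hnz|]].
      intros y hy. apply NNPP; intros hny. eauto.
Qed.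

End CoverOfTree.

Theorem corollary4p21 (T : Type) (le : T -> T -> Prop) :
  is_tree le -> pseudo_suprema_singletons le ->
  normal_space (interval_open le) ->
  countably_paracompact (interval_open le).
Proof.
  intros tree _ normal U hU hcover. pose proof tree as [po _].
  pose proof (interval_open_ext le) as hext.
  pose proof (interval_open_setT le po) as hsetT.
  pose proof (interval_open_setI le tree) as hsetI.
  pose proof (interval_open_bigcup le) as hbigcup.
  destruct (discrete_decreasing_expansion _ hext hsetT hsetI hbigcup normal
    (fun x => exists m, first_uncovered le U m x)
    (fun n x => exists m, n <= m /\ first_uncovered le U m x))
    as [G [hG [hJG [hGdec hGempty]]]].
  - exact (closed_first_uncovered le U tree hU hcover).
  - intros n x [m [_ hm]]; eauto.
  - intros m n x hmn [k [hnk hk]]; exists k; split; [lia|exact hk].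
  - intros x. destruct (exists_down_covered le U tree hU hcover x) as [k hk].
    exists k; intros [m [hkm [_ [hm _]]]].
    exact (hm (down_covered_mono le U k m x hkm hk)).
  - apply (locally_finite_refinement _ hext hsetT hsetI hbigcup normal U
      (fun n x => down_covered le U n x /\ ~ G n x) hU).
    + intros n. apply (closed_down_covered_diff le U tree n (G n) (hG n)).
      intros x hx; apply hJG; exists n; split; [lia|exact hx].
    + intros n x [hx _]; apply hx, po.
    + intros x. destruct (exists_down_covered le U tree hU hcover x) as [k hk].
      destruct (hGempty x) as [j hj]. exists (Nat.max k j); split.
      * exact (down_covered_mono le U k (Nat.max k j) x ltac:(lia) hk).
      * intros hx; exact (hj (hGdec j (Nat.max k j) x ltac:(lia) hx)).
Qed.
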